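(* Let $F\in\mathbb{Z}[x_0,\ldots,x_n]$ be a form with $\mathrm{o}(F)<n+1$. Then for all except finitely many primes $p$, $\mathrm{o}(F_p)<n+1$.
   Context: $F_p$ denotes the reduction of $F$ modulo $p$. The order of a form over a field $K$ is the smallest integer $m$ such that the form is equivalent, via an invertible linear change of variables over $K$, to a form explicitly involving only $m$ variables; $\mathrm{o}(F)$ is the order over $\mathbb{Q}$ and $\mathrm{o}(F_p)$ the order over $\mathbb{F}_p$. *)

From HB Require Import structures.
From mathcomp Require Import all_boot all_order all_algebra.
From mathcomp.multinomials Require Import mpoly.
From Stdlib Require Import ClassicalEpsilon.

Set Implicit Arguments.
Unset Strict Implicit.
Unset Printing Implicit Defensive.

Import GRing.Theory.
Local Open Scope ring_scope.

Definition lin_change (K : fieldType) (k : nat) (A : 'M[K]_k)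
  (P : {mpoly K[k]}) : {mpoly K[k]} :=
  P \mPo [tuple \sum_(j < k) (A i j)%:MP * 'X_j | i < k].

Definition involves_only (K : fieldType) (k : nat) (P : {mpoly K[k]})
  (S : {set 'I_k}) : Prop :=
  forall m, m \in msupp P -> forall i : 'I_k, (m i != 0)%N -> i \in S.

Definition order_at_most (K : fieldType) (k : nat) (P : {mpoly K[k]})
  (m : nat) : Prop :=
  exists A : 'M[K]_k, A \in unitmx /\
    exists S : {set 'I_k}, #|S| = m /\ involves_only (lin_change A P) S.

(* Boolean version (via classical logic), needed to take a minimum. *)
Definition order_at_mostb (K : fieldType) (k : nat) (P : {mpoly K[k]})
  (m : nat) : bool :=
  if excluded_middle_informative (order_at_most P m) then true else false.

Lemma order_at_mostbP (K : fieldType) (k : nat) (P : {mpoly K[k]}) m :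
  reflect (order_at_most P m) (order_at_mostb P m).
Proof.
by rewrite /order_at_mostb; case: excluded_middle_informative => h; constructor.
Qed.

Lemma order_at_most_exists (K : fieldType) (k : nat) (P : {mpoly K[k]}) :
  exists m, order_at_mostb P m.
Proof.
exists k; apply/order_at_mostbP.
exists 1%:M; split; first exact: unitmx1.
by exists setT; split; [rewrite cardsT card_ord | move=> m _ i _; rewrite inE].
Qed.

Definition form_order (K : fieldType) (k : nat) (P : {mpoly K[k]}) : nat :=
  ex_minn (order_at_most_exists P).

Definition reduce_mod (p : nat) (k : nat) (F : {mpoly int[k]}) : {mpoly 'F_p[k]} :=
  map_mpoly (fun z : int => z%:~R) F.

Definition to_rat (k : nat) (F : {mpoly int[k]}) : {mpoly rat[k]} :=
  map_mpoly (fun z : int => z%:~R) F.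

From HB Require Import structures.
From mathcomp Require Import all_boot all_order all_algebra.
From mathcomp.multinomials Require Import mpoly.

(** Let [A] be an invertible rational matrix such that [F \mPo A] involves
    only the variables in [S].  Clearing denominators, [B = D A] is an integer
    matrix with [det B <> 0], and by homogeneity [F \mPo B = D ^ d (F \mPo A)]
    still involves only [S].  Reduction modulo [p] commutes with composition
    and can only shrink supports, so the same [S] works for [F_p] as soon as
    [B] stays invertible modulo [p], i.e. for every prime [p] not dividing
    [det B]. *)

Set Implicit Arguments.
Unset Strict Implicit.
Unset Printing Implicit Defensive.

Import GRing.Theory.
Local Open Scope ring_scope.

Lemma form_order_le (K : fieldType) (k m : nat) (P : {mpoly K[k]}) :
  order_at_most P m -> (form_order P <= m)%N.
Proof.
by move=> hPm; rewrite /form_order; case: ex_minnP => m' _; apply; apply/order_at_mostbP.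
Qed.

Lemma order_at_most_form_order (K : fieldType) (k : nat) (P : {mpoly K[k]}) :
  order_at_most P (form_order P).
Proof. by rewrite /form_order; case: ex_minnP => m /order_at_mostbP. Qed.

Section MapMpoly.
Variables (R S : nzRingType).

Lemma msupp_map_mpoly_sub (f : {additive R -> S}) (k : nat) (p : {mpoly R[k]}) :
  {subset msupp (map_mpoly f p) <= msupp p}.
Proof.
move=> m; rewrite !mcoeff_msupp mcoeff_map_mpoly.
by apply: contraNN => /eqP ->; rewrite raddf0.
Qed.

Lemma dhomog_map_mpoly (f : {additive R -> S}) (k d : nat) (p : {mpoly R[k]}) :
  p \is d.-homog -> map_mpoly f p \is d.-homog.
Proof.
by move=> /dhomogP hp; apply/dhomogP => m /msupp_map_mpoly_sub; apply: hp.
Qed.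

Lemma map_comp_mpoly (f : {rmorphism R -> S}) (n k : nat)
    (lq : n.-tuple {mpoly R[k]}) (p : {mpoly R[n]}) :
  map_mpoly f (p \mPo lq) =
  map_mpoly f p \mPo [tuple map_mpoly f (tnth lq i) | i < n].
Proof.
set w := (msize p + msize (map_mpoly f p))%N.
rewrite (comp_mpolywE (w := w) _ (leq_addr _ _)).
rewrite (comp_mpolywE (w := w) _ (leq_addl _ _)) raddf_sum.
apply: eq_bigr => m _; rewrite /= map_mpolyZ mcoeff_map_mpoly rmorph_prod.
by congr (_ *: _); apply: eq_bigr => i _; rewrite rmorphXn tnth_mktuple.
Qed.

End MapMpoly.

Definition lin_subst (R : nzRingType) (k : nat) (A : 'M[R]_k) :
    k.-tuple {mpoly R[k]} :=
  [tuple \sum_(j < k) (A i j)%:MP * 'X_j | i < k].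

Lemma map_lin_change (R : nzRingType) (K : fieldType) (f : {rmorphism R -> K})
    (k : nat) (A : 'M[R]_k) (P : {mpoly R[k]}) :
  map_mpoly f (P \mPo lin_subst A) = lin_change (map_mx f A) (map_mpoly f P).
Proof.
rewrite map_comp_mpoly; congr comp_mpoly; apply: eq_from_tnth => i.
rewrite !tnth_mktuple raddf_sum /=; apply: eq_bigr => j _.
by rewrite rmorphM /= map_mpolyC map_mpolyX mxE.
Qed.

Lemma lin_change_dhomogZ (K : fieldType) (k d : nat) (A : 'M[K]_k) (c : K)
    (P : {mpoly K[k]}) :
  P \is d.-homog -> lin_change (c *: A) P = c ^+ d *: lin_change A P.
Proof.
(* Restating [hP] with the plain function [mdeg] makes [mdegE] applicable. *)
move=> /dhomog_mf hP; have {}hP : {in msupp P, forall m, mdeg m = d} := hP.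
rewrite /lin_change !comp_mpolyE scaler_sumr.
rewrite big_seq [RHS]big_seq; apply: eq_bigr => m hm.
rewrite scalerA mulrC -scalerA -(hP m hm) mdegE -prodrXr -scaler_prod.
congr (_ *: _); apply: eq_bigr => i _.
rewrite !tnth_mktuple -exprZn scaler_sumr; congr (_ ^+ _); apply: eq_bigr => j _.
by rewrite mxE -!mul_mpolyC mulrA -mpolyCM.
Qed.

Lemma involves_onlyZ (K : fieldType) (k : nat) (P : {mpoly K[k]}) (c : K) S :
  involves_only P S -> involves_only (c *: P) S.
Proof. by move=> hP m /msuppZ_le; apply: hP. Qed.

Lemma involves_only_intr (K : fieldType) (k : nat) (H : {mpoly int[k]}) S :
  involves_only (to_rat H) S ->
  involves_only (map_mpoly (fun z : int => (z%:~R : K)) H) S.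
Proof.
move=> hH m /msupp_map_mpoly_sub mH; apply: hH.
by rewrite (perm_mem (msupp_map_mpoly _ (@intr_inj rat))).
Qed.

Lemma rat_mx_scale (k : nat) (A : 'M[rat]_k) :
  exists B : 'M[int]_k, exists D : int,
    D != 0 /\ map_mx (fun z : int => (z%:~R : rat)) B = D%:~R *: A.
Proof.
pose den_but u := \prod_(v : 'I_k * 'I_k | v != u) denq (A v.1 v.2).
exists (\matrix_(i, j) (numq (A i j) * den_but (i, j))).
exists (\prod_(v : 'I_k * 'I_k) denq (A v.1 v.2)); split.
  by rewrite prodf_seq_neq0; apply/allP => v _; rewrite denq_neq0.
apply/matrixP => i j; rewrite (bigD1 (i, j)) //= !mxE intrM numqE.
by rewrite -mulrA -intrM mulrC.
Qed.

Lemma unitmx_map_intr (K : fieldType) (k : nat) (B : 'M[int]_k) :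
  (map_mx (fun z : int => (z%:~R : K)) B \in unitmx) = ((\det B)%:~R != 0 :> K).
Proof. by rewrite unitmxE (det_map_mx (intr : {rmorphism int -> K})) unitfE. Qed.

Theorem corollary3p10 (n : nat) (F : {mpoly int[n.+1]}) :
  (exists d : nat, F \is d.-homog) ->
  (form_order (to_rat F) < n.+1)%N ->
  exists s : seq nat, forall p : nat, prime p -> p \notin s ->
    (form_order (reduce_mod p F) < n.+1)%N.
Proof.
case=> d hF hFQ.
have [A [uA [S [cS hA]]]] := order_at_most_form_order (to_rat F).
have [B [D [D0 eB]]] := rat_mx_scale A.
have detB0 : \det B != 0.
  move: uA; rewrite -(@unitmxZ _ _ (D%:~R : rat)) ?unitfE ?intr_eq0 //.
  by rewrite -eB unitmx_map_intr intr_eq0.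
exists (primes `|\det B|) => p pp pNdetB.
apply: leq_ltn_trans hFQ; apply: form_order_le.
exists (map_mx (fun z : int => z%:~R) B); split.
  rewrite unitmx_map_intr -(dvdz_pcharf (pchar_Fp pp)).
  by move: pNdetB; rewrite mem_primes pp absz_gt0 detB0.
exists S; split=> //; rewrite -map_lin_change; apply: involves_only_intr.
rewrite /to_rat map_lin_change eB (lin_change_dhomogZ _ _ (dhomog_map_mpoly _ hF)).
exact: involves_onlyZ.
Qed.
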